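(* Let $\kappa\in(0,1)$, $\gamma>0$, and let $S=((x_i,y_i))_{i=1}^n\subset\mathcal{X}\times\{\pm1\}$. Run the boosting procedure with measure rule LB-NxM$(\kappa,\gamma/4)$ (described in the context) and any real-valued weak learner with advantage $\gamma$, for $T\ge 16\log(1/\kappa)/\gamma^2$ rounds, and let $H=\frac1T\sum_{t=1}^T h_t:\mathcal{X}\to[-1,1]$ be the aggregated hypothesis. Then: (Good margin) $\Pr_{(x,y)\sim \mathcal{U}(S)}[yH(x)\le\gamma]\le\kappa$; (Smoothness) every distribution $\hat\mu_t$ supplied to the weak learner satisfies $\hat\mu_t(i)\le \frac{1}{\kappa n}$ for all $i\in[n]$.
   Context: Measures on $[n]$: $\mu:[n]\to[0,1]$, $|\mu|=\sum_i\mu(i)$, density $d(\mu)=|\mu|/n$, induced distribution $\hat\mu(i)=\mu(i)/|\mu|$; $\mathrm{KL}(\mu_1\|\mu_2)=\sum_i\mu_1(i)\log(\mu_1(i)/\mu_2(i))+\mu_2(i)-\mu_1(i)$; $\Gamma_\kappa=\{\mu:d(\mu)\ge\kappa\}$; $\Pi_{\Gamma_\kappa}\tilde\mu=\arg\min_{\mu\in\Gamma_\kappa}\mathrm{KL}(\mu\|\tilde\mu)$. A weak learner with advantage $\gamma$: given $S$ and a distribution $\hat\mu$ on $[n]$, outputs $h:\mathcal{X}\to[-1,1]$ with $\frac12\sum_{j}\hat\mu(j)|h(x_j)-y_j|\le\frac12-\gamma$. LB-NxM$(\kappa,\lambda)$ on input $S$ and hypotheses $h_1,\dots,h_{t}$: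 $\ell_j(i)=1-\frac12|h_j(x_i)-y_i|$, $\tilde\mu_{t+1}(i)=\kappa e^{-\lambda\sum_{j=1}^t\ell_j(i)}$, $\mu_{t+1}=\Pi_{\Gamma_\kappa}\tilde\mu_{t+1}$, return $\hat\mu_{t+1}$. Boosting procedure: starting from the empty list, in each round $t$ compute $\hat\mu_t=$ LB-NxM$(S,(h_1,\dots,h_{t-1}))$, call the weak learner on $(S,\hat\mu_t)$ to get $h_t$, and append it. $\mathcal U(S)$ is the uniform distribution over the $n$ examples. *)

From mathcomp Require Import all_boot all_order all_algebra.
From mathcomp Require Import reals sequences exp.
Set Implicit Arguments. Unset Strict Implicit. Unset Printing Implicit Defensive.
Import Order.TTheory GRing.Theory Num.Theory.
Local Open Scope ring_scope.

Section Defs.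
Variable R : realType.
Variable n : nat.

Definition is_measure (mu : 'I_n -> R) : Prop := forall i, 0 <= mu i <= 1.

Definition msize (mu : 'I_n -> R) : R := \sum_(i < n) mu i.

Definition density (mu : 'I_n -> R) : R := msize mu / n%:R.

Definition induced (mu : 'I_n -> R) : 'I_n -> R := fun i => mu i / msize mu.

(* KL(mu1 || mu2) = sum_i mu1 i log(mu1 i / mu2 i) + mu2 i - mu1 i
   (with 0 log 0 = 0, which holds literally since 0 * _ = 0). *)
Definition KL (mu1 mu2 : 'I_n -> R) : R :=
  \sum_(i < n) (mu1 i * ln (mu1 i / mu2 i) + mu2 i - mu1 i).

Definition Gamma (kappa : R) (mu : 'I_n -> R) : Prop :=
  is_measure mu /\ kappa <= density mu.

Definition is_KL_projection (kappa : R) (mut mu : 'I_n -> R) : Prop :=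
  Gamma kappa mu /\ forall mu', Gamma kappa mu' -> KL mu mut <= KL mu' mut.

End Defs.

Definition loss (R : realType) (X : Type) (n : nat) (x : 'I_n -> X) (y : 'I_n -> R)
  (h : X -> R) (i : 'I_n) : R := 1 - `|h (x i) - y i| / 2.

(* unprojected measure used in round t (0-based): built from h_0, ..., h_{t-1} *)
Definition LB_tilde (R : realType) (X : Type) (n : nat) (x : 'I_n -> X) (y : 'I_n -> R)
  (kappa lambda : R) (h : nat -> X -> R) (t : nat) : 'I_n -> R :=
  fun i => kappa * expR (- lambda * \sum_(j < t) loss x y (h j) i).

Definition weak_hyp (R : realType) (X : Type) (n : nat) (x : 'I_n -> X) (y : 'I_n -> R)
  (gamma : R) (d : 'I_n -> R) (g : X -> R) : Prop :=
  (forall z, -1 <= g z <= 1) /\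
  (1 / 2) * \sum_(j < n) d j * `|g (x j) - y j| <= 1 / 2 - gamma.

Definition aggregate (R : realType) (X : Type) (h : nat -> X -> R) (T : nat) : X -> R :=
  fun z => (T%:R)^-1 * \sum_(t < T) h t z.

From mathcomp Require Import all_boot all_order all_algebra.
From mathcomp Require Import reals sequences exp.
From mathcomp Require Import ring lra.
Import Order.TTheory GRing.Theory Num.Theory.
Local Open Scope ring_scope.
Set Implicit Arguments. Unset Strict Implicit.

(* A potential argument.  Let m_t be the unprojected measure of round t, so
   that m_(t+1) = m_t exp(-lambda l_t), and let P(v, w) = KL(v || w) - |w|
   (this is [KLred v w]).  The first-order optimality of the projection mu_t
   of m_t onto Gamma_kappa yields, for every v in Gamma_kappa,
     P(mu_t, m_t) + sum_i mu_t(i) (1 - exp(-lambda l_t(i))) <= P(v, m_(t+1)),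
   and by the weak-learning guarantee the gain in round t is at least
   lambda/(1+lambda) kappa n (1/2 + gamma).  Telescoping from
   P(mu_0, m_0) >= -kappa n and testing against the measure of mass kappa n
   spread uniformly over the set M of examples of margin at most gamma gives
   T lambda/(1+lambda) (1/2+gamma) <= ln(1/kappa) + lambda T (1+gamma)/2
   whenever |M| > kappa n, which the choice of T rules out.  Smoothness holds
   because mu_t <= 1 and |mu_t| >= kappa n. *)

Section RealInequalities.
Variable R : realType.
Implicit Types a b c e u w A C L : R.

Lemma ln_le_subr1 u : 0 < u -> ln u <= u - 1.
Proof. by move=> u0; have := @le_ln1Dx R (u - 1); rewrite addrCA subrr addr0; apply; lra. Qed.

Lemma KL_term_ge0 a b : 0 <= a -> 0 < b -> 0 <= a * ln (a / b) + b - a.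
Proof.
move=> a0 b0; have [->|a_neq0] := eqVneq a 0; first by rewrite mul0r; lra.
have a_gt0 : 0 < a by rewrite lt_def a_neq0.
have ln_ba : ln (b / a) = - ln (a / b).
  by rewrite -lnV ?posrE ?divr_gt0 // invf_div.
have : a * ln (b / a) <= a * (b / a - 1) by rewrite ler_pM2l // ln_le_subr1 ?divr_gt0.
by rewrite ln_ba mulrBr mulr1 mulrCA divff ?mulr1 ?gt_eqF //; lra.
Qed.

Lemma mul_ln_div_sub a b c : 0 <= a -> 0 < b -> 0 < c ->
  a * ln (a / c) - a * ln (b / c) = a * ln (a / b).
Proof.
move=> a0 b0 c0; have [->|a_neq0] := eqVneq a 0; first by rewrite !mul0r subr0.
have a_gt0 : 0 < a by rewrite lt_def a_neq0.
by rewrite !ln_div ?posrE //; ring.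
Qed.

Lemma KL_term_tangent a c w : 0 <= a -> 0 < c -> 0 < w ->
  ln (c / w) * (a - c) <= (a * ln (a / w) - a) - (c * ln (c / w) - c).
Proof.
move=> a0 c0 w0; have := KL_term_ge0 a0 c0.
rewrite -(mul_ln_div_sub a0 c0 w0); lra.
Qed.

Lemma ln_perturb_le a b e : 0 < a -> 0 <= b -> 0 < e ->
  ln ((a + e / (1 + e) * (b - a)) / a) * (b - a) <= e * ((b - a) ^+ 2 / a).
Proof.
move=> a0 b0 e0; set s := e / (1 + e); set d := b - a; set c := a + s * d.
have s_gt0 : 0 < s by rewrite divr_gt0 //; lra.
have s_lt1 : s < 1 by rewrite ltr_pdivrMr; lra.
have s_le_e : s <= e by rewrite ler_pdivrMr; nra.
have c_gt0 : 0 < c by rewrite /c /d; nra.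
have d2a_ge0 : 0 <= d ^+ 2 / a by rewrite divr_ge0 ?sqr_ge0 ?ltW.
have [d_ge0|d_lt0] := lerP 0 d.
  have le_ln : ln (c / a) <= s * d / a.
    have -> : s * d / a = c / a - 1 by rewrite /c; field; rewrite gt_eqF.
    exact/ln_le_subr1/divr_gt0.
  apply: le_trans (ler_wpM2r d_ge0 le_ln) _.
  have -> : s * d / a * d = s * (d ^+ 2 / a) by ring.
  exact: ler_wpM2r.
have ge_ln : s * d / c <= ln (c / a).
  have ln_ca : ln (c / a) = - ln (a / c).
    by rewrite -lnV ?posrE ?divr_gt0 // invf_div.
  rewrite ln_ca lerNr.
  have -> : - (s * d / c) = a / c - 1 by rewrite /c; field; rewrite gt_eqF.
  exact/ln_le_subr1/divr_gt0.
apply: le_trans (ler_wnM2r (ltW d_lt0) ge_ln) _.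
(* This is where the step size e / (1 + e) is needed. *)
have sa_le_ec : s * a <= e * c.
  have s1e : s * (1 + e) = e by rewrite /s mulfVK //; lra.
  have := congr1 (fun z => z * a) s1e.
  have := mulr_ge0 (mulr_ge0 (ltW e0) (ltW s_gt0)) b0.
  rewrite /c /d; lra.
have -> : s * d / c * d = s * a * (d ^+ 2 / (a * c)) by field; rewrite !gt_eqF.
have -> : e * (d ^+ 2 / a) = e * c * (d ^+ 2 / (a * c)) by field; rewrite !gt_eqF.
by rewrite ler_wpM2r // divr_ge0 ?sqr_ge0 // ltW ?mulr_gt0.
Qed.

Lemma ge0_of_addr_eps A C : 0 <= C -> (forall e, 0 < e -> 0 <= A + e * C) -> 0 <= A.
Proof.
move=> C0 hA; apply/ler_addgt0Pr => e e0.
have eC_le : e / (C + 1) * C <= e.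
  by rewrite mulrAC ler_pdivrMr ?ler_pM2l //; lra.
have := hA (e / (C + 1)) (divr_gt0 e0 (ltr_wpDl C0 ltr01)); lra.
Qed.

Lemma divD1_le_subr_expRN a L : 0 <= a -> a <= L -> a / (1 + L) <= 1 - expR (- a).
Proof.
move=> a0 aL; rewrite ler_pdivrMr; last lra.
have : (1 + a) * expR (- a) <= 1.
  by rewrite expRN ler_pdivrMr ?expR_gt0 // mul1r expR_ge1Dx.
have := expR_ge0 (- a); have : expR (- a) <= 1 by rewrite expR_le1; lra.
nra.
Qed.

Lemma boosting_gain_gt_cost (g L T : R) : 0 < g <= 1 / 2 -> 0 < L -> 16 * L <= T * g ^+ 2 ->
  L + g / 4 * T * (1 + g) / 2 < T * (g / 4 / (1 + g / 4)) * (1 / 2 + g).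
Proof.
move=> /andP[g0 g_le] L0 hT; rewrite -subr_gt0.
have -> : T * (g / 4 / (1 + g / 4)) * (1 / 2 + g) - (L + g / 4 * T * (1 + g) / 2)
    = (T * g ^+ 2 * (3 - g) / 32 - (1 + g / 4) * L) / (1 + g / 4).
  by field; lra.
rewrite divr_gt0 //; last lra.
have : 5 / 2 * (T * g ^+ 2) <= T * g ^+ 2 * (3 - g) by rewrite mulrC ler_wpM2l; lra.
nra.
Qed.

End RealInequalities.

Section ReducedKL.
Variables (R : realType) (n : nat).
Implicit Types (kappa B : R) (v w : 'I_n -> R).

Definition KLred v w := \sum_i (v i * ln (v i / w i) - v i).

Lemma KL_KLred v w : KL v w = KLred v w + msize w.
Proof. by rewrite /KL /KLred /msize -big_split; apply: eq_bigr => i _; rewrite addrAC. Qed.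

Lemma KLred_ge v w : (forall i, 0 <= v i) -> (forall i, 0 < w i) -> - msize w <= KLred v w.
Proof.
move=> v_ge0 w_gt0; rewrite lerNl -subr_ge0 opprK addrC -KL_KLred.
by apply: sumr_ge0 => i _; exact: KL_term_ge0.
Qed.

Lemma KLred_le v w B : (forall i, 0 <= v i <= 1) -> (forall i, 0 < w i) ->
  (forall i, 0 < v i -> - ln (w i) <= B) -> KLred v w <= msize v * (B - 1).
Proof.
move=> v01 w_gt0 lnw_le; rewrite /msize mulr_suml; apply: ler_sum => i _.
have /andP[vi_ge0 vi_le1] := v01 i.
have [vi_eq0|vi_neq0] := eqVneq (v i) 0; first by rewrite vi_eq0 !mul0r subr0.
have vi_gt0 : 0 < v i by rewrite lt_def vi_neq0.
have : ln (v i) <= 0 := ln_le0 vi_le1.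
have := lnw_le i vi_gt0.
rewrite ln_div ?posrE //; nra.
Qed.

Lemma Gamma_measure kappa v : Gamma kappa v -> forall i, 0 <= v i <= 1.
Proof. by case. Qed.

Lemma GammaE kappa v : (0 < n)%N ->
  Gamma kappa v <-> is_measure v /\ kappa * n%:R <= msize v.
Proof. by move=> n_gt0; rewrite /Gamma /density ler_pdivlMr ?ltr0n. Qed.

Lemma Gamma_convex kappa v w s : Gamma kappa v -> Gamma kappa w -> 0 <= s <= 1 ->
  Gamma kappa (fun i => w i + s * (v i - w i)).
Proof.
move=> [v01 v_dens] [w01 w_dens] /andP[s0 s1]; split.
  move=> i; have /andP[? ?] := v01 i; have /andP[? ?] := w01 i.
  by apply/andP; split; nra.
have -> : density (fun i => w i + s * (v i - w i))
    = density w + s * (density v - density w).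
  rewrite /density /msize big_split /= -mulr_sumr sumrB; ring.
nra.
Qed.

Lemma Gamma1 kappa : (0 < n)%N -> kappa <= 1 -> Gamma kappa (fun _ : 'I_n => 1).
Proof.
move=> n_gt0 kappa_le1; apply/GammaE => //; split; first by move=> i; rewrite ler01 lexx.
by rewrite /msize sumr_const card_ord -mulr_natr mul1r ler_piMl.
Qed.

Lemma induced_bounds kappa v i : (0 < n)%N -> 0 < kappa -> Gamma kappa v ->
  0 <= induced v i <= (kappa * n%:R)^-1.
Proof.
move=> n_gt0 kappa_gt0 /(GammaE _ _ n_gt0)[v01 mass_ge].
have mass_gt0 : 0 < msize v by rewrite (lt_le_trans _ mass_ge) ?mulr_gt0 ?ltr0n.
have /andP[vi_ge0 vi_le1] := v01 i.
rewrite /induced; apply/andP; split; first by rewrite divr_ge0 // ltW.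
apply: le_trans (_ : 1 / msize v <= _).
  by rewrite ler_pM2r ?invr_gt0.
by rewrite div1r lef_pV2 ?posrE ?mulr_gt0 ?ltr0n.
Qed.

End ReducedKL.

Section KLProjectionOptimality.
Variables (R : realType) (n : nat) (kappa : R) (m mu : 'I_n -> R).
Hypotheses (m_gt0 : forall i, 0 < m i) (mu_proj : is_KL_projection kappa m mu).

Lemma KL_projection_Gamma : Gamma kappa mu.
Proof. by case: mu_proj. Qed.

Lemma KL_projection_min v : Gamma kappa v -> KLred mu m <= KLred v m.
Proof. by move=> Gv; have := mu_proj.2 v Gv; rewrite !KL_KLred lerD2r. Qed.

Lemma KL_projection_tangent v s : Gamma kappa v -> 0 < s <= 1 ->
  (forall i, 0 < mu i + s * (v i - mu i)) ->
  0 <= \sum_i ln ((mu i + s * (v i - mu i)) / m i) * (v i - mu i).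
Proof.
move=> Gv /andP[s_gt0 s_le1] mus_gt0.
set mus := fun i => mu i + s * (v i - mu i).
have Gmus : Gamma kappa mus.
  by apply: Gamma_convex => //; [exact: KL_projection_Gamma | rewrite ltW].
have tangent : \sum_i ln (mus i / m i) * (mu i - mus i) <= KLred mu m - KLred mus m.
  rewrite /KLred -sumrB; apply: ler_sum => i _.
  apply: KL_term_tangent; [|exact: mus_gt0|exact: m_gt0].
  by have /andP[] := KL_projection_Gamma.1 i.
have E : \sum_i ln (mus i / m i) * (mu i - mus i)
    = - s * \sum_i ln (mus i / m i) * (v i - mu i).
  by rewrite mulr_sumr; apply: eq_bigr => i _; rewrite /mus; ring.
have : - s * \sum_i ln (mus i / m i) * (v i - mu i) <= 0.
  by rewrite -E; apply: le_trans tangent _; rewrite subr_le0 KL_projection_min.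
by rewrite mulNr oppr_le0 pmulr_rge0.
Qed.

Hypotheses (n_gt0 : (0 < n)%N) (kappa_le1 : kappa <= 1).

(* If mu i = 0, a step of size s towards the all-ones measure contributes
   ln (s / m i) to the directional derivative, which is unbounded below. *)
Lemma KL_projection_gt0 i : 0 < mu i.
Proof.
have mu01 := KL_projection_Gamma.1.
have /andP[mui_ge0 _] := mu01 i.
rewrite lt_def mui_ge0 andbT; apply/negP => /eqP mui0.
set C := \sum_j `|ln (m j)|; set s := expR (- C - 1).
have C_ge0 : 0 <= C by apply: sumr_ge0 => j _.
have s_gt0 : 0 < s := expR_gt0 _.
have s_le1 : s <= 1 by rewrite expR_le1; lra.
have mus_bounds j : s <= mu j + s * (1 - mu j) <= 1.
  by have /andP[? ?] := mu01 j; apply/andP; split; nra.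
have mus_gt0 j : 0 < mu j + s * (1 - mu j).
  by have /andP[? _] := mus_bounds j; exact: lt_le_trans s_gt0 _.
have s01 : 0 < s <= 1 by rewrite s_gt0 s_le1.
have := KL_projection_tangent (Gamma1 n_gt0 kappa_le1) s01 mus_gt0.
rewrite (bigD1 i) //= mui0 subr0 !mulr1 add0r => tangent_ge0.
have rest_le : \sum_(j | j != i) ln ((mu j + s * (1 - mu j)) / m j) * (1 - mu j)
    <= \sum_(j | j != i) `|ln (m j)|.
  apply: ler_sum => j _; have /andP[muj_ge0 muj_le1] := mu01 j.
  have /andP[_ musj_le1] := mus_bounds j.
  have : ln ((mu j + s * (1 - mu j)) / m j) <= `|ln (m j)|.
    rewrite ln_div ?posrE //; have := ln_le0 musj_le1.
    have := ler_norm (- ln (m j)); rewrite normrN; lra.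
  move=> X_le; have N_ge0 := normr_ge0 (ln (m j)).
  have : 0 <= (`|ln (m j)| - ln ((mu j + s * (1 - mu j)) / m j)) * (1 - mu j).
    by rewrite mulr_ge0 // subr_ge0.
  have := mulr_ge0 N_ge0 muj_ge0; nra.
have C_split : C = `|ln (m i)| + \sum_(j | j != i) `|ln (m j)| by rewrite /C (bigD1 i).
have ln_s : ln (s / m i) = - C - 1 - ln (m i) by rewrite ln_div ?posrE // expRK.
have := ler_norm (- ln (m i)); rewrite normrN; lra.
Qed.

Lemma KL_projection_foc v : Gamma kappa v -> 0 <= \sum_i ln (mu i / m i) * (v i - mu i).
Proof.
move=> Gv; have mu_gt0 := KL_projection_gt0.
apply: (@ge0_of_addr_eps _ _ (\sum_i (v i - mu i) ^+ 2 / mu i)).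
  by apply: sumr_ge0 => i _; rewrite divr_ge0 ?sqr_ge0 ?ltW.
move=> e e_gt0; set s := e / (1 + e).
have s_gt0 : 0 < s by rewrite divr_gt0 //; lra.
have s_lt1 : s < 1 by rewrite ltr_pdivrMr; lra.
have mus_gt0 i : 0 < mu i + s * (v i - mu i).
  have /andP[vi_ge0 _] := Gv.1 i.
  have : 0 < mu i * (1 - s) by rewrite mulr_gt0 // subr_gt0.
  have := mulr_ge0 (ltW s_gt0) vi_ge0; nra.
have s01 : 0 < s <= 1 by rewrite s_gt0 ltW.
apply: le_trans (KL_projection_tangent Gv s01 mus_gt0) _.
rewrite mulr_sumr -big_split; apply: ler_sum => i _ /=.
have /andP[vi_ge0 _] := Gv.1 i.
have := ln_perturb_le (mu_gt0 i) vi_ge0 e_gt0; rewrite -/s => perturb_le.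
have -> : ln ((mu i + s * (v i - mu i)) / m i)
    = ln (mu i / m i) + ln ((mu i + s * (v i - mu i)) / mu i).
  by rewrite !ln_div ?posrE //; ring.
by rewrite mulrDl lerD2l.
Qed.

Lemma KL_projection_progress v a w : Gamma kappa v ->
  (forall i, w i = m i * expR (- a i)) ->
  KLred mu m + \sum_i mu i * (1 - expR (- a i)) <= KLred v w.
Proof.
move=> Gv wE; rewrite -subr_ge0.
have -> : KLred v w = KLred v (fun i => m i * expR (- a i)).
  by apply: eq_bigr => i _; rewrite wE.
have -> : KLred v (fun i => m i * expR (- a i)) - (KLred mu m + \sum_i mu i * (1 - expR (- a i)))
    = \sum_i ln (mu i / m i) * (v i - mu i)
      + \sum_i (v i * ln (v i / (mu i * expR (- a i))) + mu i * expR (- a i) - v i).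
  rewrite /KLred opprD addrA -!sumrB -big_split; apply: eq_bigr => i _ /=.
  have /andP[vi_ge0 _] := Gv.1 i.
  have := mul_ln_div_sub vi_ge0 (mulr_gt0 (KL_projection_gt0 i) (expR_gt0 (- a i)))
    (mulr_gt0 (m_gt0 i) (expR_gt0 (- a i))).
  rewrite -mulf_div divff ?mulr1 ?gt_eqF ?expR_gt0 //; lra.
rewrite addr_ge0 ?KL_projection_foc //; apply: sumr_ge0 => i _.
by apply: KL_term_ge0; [have /andP[] := Gv.1 i | rewrite mulr_gt0 ?expR_gt0 ?KL_projection_gt0].
Qed.

End KLProjectionOptimality.

Section Losses.
Variables (R : realType) (X : Type) (n : nat) (x : 'I_n -> X) (y : 'I_n -> R).

Lemma lossE (g : X -> R) i : (y i = 1 \/ y i = -1) -> -1 <= g (x i) <= 1 ->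
  loss x y g i = (1 + y i * g (x i)) / 2.
Proof.
move=> yi /andP[g_ge g_le]; rewrite /loss.
by case: yi => ->; [rewrite ler0_norm|rewrite opprK ger0_norm]; try field; lra.
Qed.

Lemma loss_bounds (g : X -> R) i : (y i = 1 \/ y i = -1) -> -1 <= g (x i) <= 1 ->
  0 <= loss x y g i <= 1.
Proof.
move=> yi g_bd; rewrite lossE //; have /andP[? ?] := g_bd.
by case: yi => ->; apply/andP; split; lra.
Qed.

Lemma weak_hyp_gamma_le gamma d g : (forall i, 0 <= d i) -> weak_hyp x y gamma d g ->
  gamma <= 1 / 2.
Proof.
move=> d_ge0 [_ err_le]; suff : 0 <= 1 / 2 * \sum_j d j * `|g (x j) - y j| by lra.
by apply: mulr_ge0; [lra | apply: sumr_ge0 => j _; exact: mulr_ge0].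
Qed.

Lemma weak_hyp_edge gamma v g : 0 < msize v -> weak_hyp x y gamma (induced v) g ->
  msize v * (1 / 2 + gamma) <= \sum_i v i * loss x y g i.
Proof.
move=> mass_gt0 [_ err_le].
have -> : \sum_i v i * loss x y g i = msize v - 1 / 2 * \sum_i v i * `|g (x i) - y i|.
  by rewrite /msize mulr_sumr -sumrB; apply: eq_bigr => i _; rewrite /loss; ring.
set err := \sum_i v i * `|g (x i) - y i|.
have : err / 2 <= msize v * (1 / 2 - gamma).
  have -> : err / 2 = msize v * (1 / 2 * (err / msize v)) by field; rewrite gt_eqF.
  rewrite ler_pM2l //; move: err_le; rewrite /err mulr_suml.
  by under eq_bigr => i _ do rewrite /induced mulrAC.
lra.
Qed.

Lemma loss_sum_aggregate (h : nat -> X -> R) T i : (y i = 1 \/ y i = -1) ->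
  (forall t, (t < T)%N -> -1 <= h t (x i) <= 1) ->
  \sum_(t < T) loss x y (h t) i = T%:R * (1 + y i * aggregate h T (x i)) / 2.
Proof.
move=> yi h_bd; rewrite (eq_bigr (fun t : 'I_T => (1 + y i * h t (x i)) / 2)) => [|t _].
  rewrite -mulr_suml big_split sumr_const card_ord -mulr_sumr /aggregate /=.
  case: T h_bd => [|T] _; first by rewrite big_ord0 !mul0r mulr0 addr0 mul0r.
  by congr (_ / _); field; rewrite addrC natr1 pnatr_eq0.
exact: lossE yi (h_bd t (ltn_ord t)).
Qed.

End Losses.

Section UnprojectedMeasure.
Variables (R : realType) (X : Type) (n : nat) (x : 'I_n -> X) (y : 'I_n -> R).
Variables (kappa lambda : R) (h : nat -> X -> R).

Lemma LB_tilde0 i : LB_tilde x y kappa lambda h 0 i = kappa.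
Proof. by rewrite /LB_tilde big_ord0 mulr0 expR0 mulr1. Qed.

Lemma LB_tildeS t i : LB_tilde x y kappa lambda h t.+1 i
  = LB_tilde x y kappa lambda h t i * expR (- (lambda * loss x y (h t) i)).
Proof. by rewrite /LB_tilde big_ord_recr /= -mulrA -expRD; congr (_ * expR _); ring. Qed.

Hypothesis kappa_gt0 : 0 < kappa.

Lemma LB_tilde_gt0 t i : 0 < LB_tilde x y kappa lambda h t i.
Proof. by rewrite mulr_gt0 ?expR_gt0. Qed.

Lemma lnN_LB_tilde t i : - ln (LB_tilde x y kappa lambda h t i)
  = ln kappa^-1 + lambda * \sum_(j < t) loss x y (h j) i.
Proof. by rewrite lnM ?posrE ?expR_gt0 // expRK lnV ?posrE //; ring. Qed.

End UnprojectedMeasure.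

Section Boosting.
Variables (R : realType) (X : Type) (n : nat)
  (x : 'I_n -> X) (y : 'I_n -> R) (kappa gamma : R) (T : nat)
  (h : nat -> X -> R) (mu : nat -> 'I_n -> R).
Hypotheses (n_gt0 : (0 < n)%N) (kappa01 : 0 < kappa < 1) (gamma_gt0 : 0 < gamma).
Hypothesis y_pm1 : forall i, y i = 1 \/ y i = -1.
Hypothesis mu_proj : forall t, (t < T)%N ->
  is_KL_projection kappa (LB_tilde x y kappa (gamma / 4) h t) (mu t).
Hypothesis h_weak : forall t, (t < T)%N -> weak_hyp x y gamma (induced (mu t)) (h t).

Let lam := gamma / 4.
Let m := LB_tilde x y kappa lam h.
Let gain t := \sum_i mu t i * (1 - expR (- (lam * loss x y (h t) i))).

Let kappa_gt0 : 0 < kappa. Proof. by case/andP: kappa01. Qed.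
Let kappa_le1 : kappa <= 1. Proof. by case/andP: kappa01 => _ /ltW. Qed.
Let lam_gt0 : 0 < lam. Proof. by rewrite divr_gt0. Qed.
Let mass_gt0 : 0 < kappa * n%:R. Proof. by rewrite mulr_gt0 ?ltr0n. Qed.
Let m_gt0 t i : 0 < m t i. Proof. exact: LB_tilde_gt0. Qed.

Let loss_in01 t i : (t < T)%N -> 0 <= loss x y (h t) i <= 1.
Proof. by move=> tT; apply: loss_bounds => //; exact: (h_weak tT).1. Qed.

Lemma mu_Gamma t : (t < T)%N -> Gamma kappa (mu t).
Proof. by move=> tT; exact: KL_projection_Gamma (mu_proj tT). Qed.

Lemma potential_telescope k : (k < T)%N -> forall v, Gamma kappa v ->
  KLred (mu 0) (m 0) + \sum_(t < k.+1) gain t <= KLred v (m k.+1).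
Proof.
have step t v : (t < T)%N -> Gamma kappa v -> KLred (mu t) (m t) + gain t <= KLred v (m t.+1).
  move=> tT Gv; apply: (KL_projection_progress (m_gt0 t) (mu_proj tT) n_gt0 kappa_le1 Gv).
  by move=> i; rewrite /m LB_tildeS.
elim: k => [|k IHk] kT v Gv; first by rewrite big_ord1; exact: step.
rewrite big_ord_recr /= addrA; apply: le_trans (step _ _ kT Gv).
by rewrite lerD2r; apply: IHk; [exact: ltnW | exact: mu_Gamma].
Qed.

Lemma gain_ge t : (t < T)%N -> lam / (1 + lam) * (kappa * n%:R) * (1 / 2 + gamma) <= gain t.
Proof.
move=> tT; have [/(GammaE _ _ n_gt0)[mu01 mass_ge] _] := mu_proj tT.
have edge := weak_hyp_edge (lt_le_trans mass_gt0 mass_ge) (h_weak tT).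
have edge_le_gain : lam / (1 + lam) * \sum_i mu t i * loss x y (h t) i <= gain t.
  rewrite mulr_sumr; apply: ler_sum => i _.
  have /andP[l_ge0 l_le1] := loss_in01 i tT; have /andP[mu_ge0 _] := mu01 i.
  rewrite mulrCA ler_wpM2l // mulrAC.
  by apply: divD1_le_subr_expRN; [rewrite mulr_ge0 // ltW | rewrite ler_piMr // ltW].
have c_ge0 : 0 <= lam / (1 + lam) by rewrite divr_ge0 //; have := lam_gt0; lra.
apply: le_trans _ edge_le_gain; rewrite -mulrA ler_wpM2l //.
by apply: le_trans _ edge; apply: ler_wpM2r mass_ge; have := gamma_gt0; lra.
Qed.

Lemma total_gain_ge :
  T%:R * (lam / (1 + lam) * (kappa * n%:R) * (1 / 2 + gamma)) <= \sum_(t < T) gain t.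
Proof.
set c := lam / (1 + lam) * _ * _.
have -> : T%:R * c = \sum_(t < T) c by rewrite sumr_const card_ord mulr_natl.
by apply: ler_sum => t _; exact: gain_ge.
Qed.

Lemma potential_start : (0 < T)%N -> - (kappa * n%:R) <= KLred (mu 0) (m 0).
Proof.
move=> T_gt0; have -> : kappa * n%:R = msize (m 0).
  rewrite /msize (eq_bigr (fun=> kappa)) => [|i _]; last by rewrite /m LB_tilde0.
  by rewrite sumr_const card_ord mulr_natr.
by apply: KLred_ge => // i; have /andP[] := (mu_Gamma T_gt0).1 i.
Qed.

Lemma potential_end_le v : (forall i, 0 <= v i <= 1) ->
  (forall i, 0 < v i -> y i * aggregate h T (x i) <= gamma) ->
  KLred v (m T) <= msize v * (ln kappa^-1 + lam * (T%:R * (1 + gamma) / 2) - 1).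
Proof.
move=> v01 v_supp; apply: KLred_le => // i vi_gt0.
rewrite /m lnN_LB_tilde // loss_sum_aggregate // => [|t tT]; last exact: (h_weak tT).1.
rewrite lerD2l (ler_wpM2l (ltW lam_gt0)) // ler_pM2r ?invr_gt0 //.
by rewrite ler_wpM2l ?ler0n // lerD2l v_supp.
Qed.

Lemma smoothness t i : (t < T)%N -> induced (mu t) i <= (kappa * n%:R)^-1.
Proof. by move=> tT; have /andP[] := induced_bounds i n_gt0 kappa_gt0 (mu_Gamma tT). Qed.

Lemma margin_error : 16 * ln kappa^-1 / gamma ^+ 2 <= T%:R ->
  #|[set i : 'I_n | y i * aggregate h T (x i) <= gamma]|%:R / n%:R <= kappa.
Proof.
move=> T_ge; set M := [set i | _]; set L := ln kappa^-1.
have L_gt0 : 0 < L by case/andP: kappa01 => k0 k1; rewrite ln_gt0 // invf_gt1.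
have budget : 16 * L <= T%:R * gamma ^+ 2 by rewrite -ler_pdivrMr ?exprn_gt0.
have T_gt0 : (0 < T)%N.
  by rewrite lt0n; apply/negP => /eqP T0; move: budget; rewrite T0 mul0r; lra.
have gamma_le : gamma <= 1 / 2.
  apply: weak_hyp_gamma_le (h_weak T_gt0) => i.
  by have /andP[] := induced_bounds i n_gt0 kappa_gt0 (mu_Gamma T_gt0).
rewrite ler_pdivrMr ?ltr0n // leNgt; apply/negP => M_gt.
set P := kappa * n%:R in M_gt.
have M_gt0 : 0 < #|M|%:R :> R := lt_trans mass_gt0 M_gt.
pose v i := if i \in M then P / #|M|%:R else 0.
have v01 i : 0 <= v i <= 1.
  rewrite /v; case: ifP => _; last by rewrite lexx ler01.
  apply/andP; split; first exact: divr_ge0 (ltW mass_gt0) (ltW M_gt0).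
  by rewrite ler_pdivrMr // mul1r ltW.
have v_supp i : 0 < v i -> y i * aggregate h T (x i) <= gamma.
  by rewrite /v; case: ifP => [|_]; [rewrite inE | rewrite ltxx].
have v_mass : msize v = P.
  by rewrite /msize /v -big_mkcond /= sumr_const -[LHS]mulr_natr divfK // gt_eqF.
have Gv : Gamma kappa v by apply/(GammaE _ _ n_gt0); split => //; rewrite v_mass.
have lower : KLred (mu 0) (m 0) + \sum_(t < T) gain t <= KLred v (m T).
  have TT : (T.-1 < T)%N by rewrite prednK.
  by have := potential_telescope TT Gv; rewrite prednK.
have := potential_end_le v01 v_supp; rewrite v_mass -/L => upper.
have := potential_start T_gt0; have := total_gain_ge; rewrite -/P => gains start.
have : P * (T%:R * (lam / (1 + lam) * (1 / 2 + gamma)) - (L + lam * (T%:R * (1 + gamma) / 2)))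
    <= 0.
  have := mass_gt0; rewrite -/P; lra.
rewrite pmulr_rle0 ?subr_le0 //; apply/negP; rewrite -ltNge.
have gamma01 : 0 < gamma <= 1 / 2 by rewrite gamma_gt0 gamma_le.
have := boosting_gain_gt_cost gamma01 L_gt0 budget.
rewrite /lam; lra.
Qed.

End Boosting.

Theorem mainTheorem3 (R : realType) (X : Type) (n : nat)
  (x : 'I_n -> X) (y : 'I_n -> R) (kappa gamma : R) (T : nat)
  (h : nat -> X -> R) (mu : nat -> 'I_n -> R) :
  (0 < n)%N ->
  0 < kappa < 1 -> 0 < gamma ->
  (forall i, y i = 1 \/ y i = -1) ->
  16 * ln (kappa^-1) / gamma ^+ 2 <= T%:R ->
  (* round t (0-based, t < T): mu t = LB-NxM(kappa, gamma/4) on h_0..h_{t-1} *)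
  (forall t, (t < T)%N ->
     is_KL_projection kappa (LB_tilde x y kappa (gamma / 4) h t) (mu t)) ->
  (* the weak learner returns h t with advantage gamma on the induced distribution *)
  (forall t, (t < T)%N -> weak_hyp x y gamma (induced (mu t)) (h t)) ->
  (#|[set i : 'I_n | y i * aggregate h T (x i) <= gamma]|%:R / n%:R <= kappa)
  /\ (forall t, (t < T)%N -> forall i, induced (mu t) i <= (kappa * n%:R)^-1).
Proof.
move=> n_gt0 kappa01 gamma_gt0 y_pm1 T_ge mu_proj h_weak; split.
  exact: (margin_error n_gt0 kappa01 gamma_gt0 y_pm1 mu_proj h_weak T_ge).
by move=> t tT i; exact: (smoothness n_gt0 kappa01 mu_proj i tT).
Qed.
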